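(* Let $\mathcal{O}=(X_{\min},X_{\max})$ be bounded, $T>0$, and let $a=\tfrac12\sigma^2$, $b$, $r$ be bounded functions on $(0,T)\times\mathcal{O}$ with $a(t,x)\ge\eta_0>0$ and $|a(t,x)-a(t,y)|\le L|x-y|$ for all $t\in(0,T)$, $x,y\in\mathcal{O}$. For $J\ge1$, $h=\frac{X_{\max}-X_{\min}}{J+1}$, $x_j=X_{\min}+jh$, and a fixed time $t$, write $a_j=a(t,x_j)$, $b_j=b(t,x_j)$, $r_j=r(t,x_j)$, and let $\tilde A$ be the $J\times J$ matrix defined by, for $x\in\mathbb{R}^J$ extended by $x_{-1}=x_0=x_{J+1}=x_{J+2}=0$, $$(\tilde Ax)_j=a_j\Big[\tfrac{-x_{j-1}+2x_j-x_{j+1}}{h^2}+\tfrac{x_{j-2}-4x_{j-1}+6x_j-4x_{j+1}+x_{j+2}}{12h^2}\Big]+b_j\Big[\tfrac{x_{j+1}-x_{j-1}}{2h}+\tfrac{x_{j-2}-2x_{j-1}+2x_{j+1}-x_{j+2}}{12h}\Big]+r_jx_j,$$ $j=1,\dots,J$ (the fourth-order finite difference approximation of $-a w_{xx}+b w_x+r w$). Then there exist $\eta_2>0$ and $\gamma_2\ge0$, independent of $J$, $h$ and $t$, such that for all $x\in\mathbb{R}^J$, $$\langle x,\tilde Ax\rangle\ge\eta_2N(x/h)^2-\gamma_2\|x\|_2^2,$$ where $N(x):=\big(\sum_{j=1}^{J+1}|x_j-x_{j-1}|^2\big)^{1/2}$ with $x_0=x_{J+1}=0$.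
   Context: $\langle\cdot,\cdot\rangle$ and $\|\cdot\|_2$ denote the Euclidean inner product and norm on $\mathbb{R}^J$. *)

From HB Require Import structures.
From mathcomp Require Import all_boot all_order all_algebra.
From mathcomp Require Import reals.
Set Implicit Arguments. Unset Strict Implicit. Unset Printing Implicit Defensive.
Import Order.TTheory GRing.Theory Num.Theory.
Local Open Scope ring_scope.

Section Defs.
Variable R : realType.

(* Extension of x in R^J (a column vector indexed 0..J-1, representing
   x_1..x_J) to all integer indices j, with x_j = 0 for j outside 1..J. *)
Definition ext (J : nat) (x : 'cV[R]_J) (j : int) : R :=
  \sum_(i < J) (if (Posz i.+1 == j) then x i ord0 else 0).

Definition mesh (Xmin Xmax : R) (J : nat) : R := (Xmax - Xmin) / (J.+1)%:R.

Definition grid (Xmin Xmax : R) (J j : nat) : R := Xmin + j%:R * mesh Xmin Xmax J.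

(* The fourth-order finite difference operator tilde A applied to x,
   at time t: component i (0-based) corresponds to j = i+1. *)
Definition Atilde_app (a b r : R -> R -> R) (Xmin Xmax : R) (J : nat) (t : R)
    (x : 'cV[R]_J) : 'cV[R]_J :=
  let h := mesh Xmin Xmax J in
  \col_(i < J)
    let j : int := Posz i.+1 in
    let xm2 := ext x (j - 2) in let xm1 := ext x (j - 1) in
    let x0 := ext x j in
    let xp1 := ext x (j + 1) in let xp2 := ext x (j + 2) in
    let xj := grid Xmin Xmax J i.+1 in
    a t xj * ((- xm1 + 2 * x0 - xp1) / h ^+ 2
              + (xm2 - 4 * xm1 + 6 * x0 - 4 * xp1 + xp2) / (12 * h ^+ 2))
    + b t xj * ((xp1 - xm1) / (2 * h)
              + (xm2 - 2 * xm1 + 2 * xp1 - xp2) / (12 * h))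
    + r t xj * x0.

Definition dotv (J : nat) (x y : 'cV[R]_J) : R := \sum_(i < J) x i ord0 * y i ord0.
Definition norm2sq (J : nat) (x : 'cV[R]_J) : R := \sum_(i < J) x i ord0 ^+ 2.

Definition Nnorm (J : nat) (x : 'cV[R]_J) : R :=
  Num.sqrt (\sum_(k < J.+1) `|ext x (Posz k.+1) - ext x (Posz k)| ^+ 2).

End Defs.

From HB Require Import structures.
From mathcomp Require Import all_boot all_order all_algebra.
From mathcomp Require Import reals.
From mathcomp Require Import ring lra zify.
Import Order.TTheory GRing.Theory Num.Theory.
Local Open Scope ring_scope.

Set Implicit Arguments.
Unset Strict Implicit.
Unset Printing Implicit Defensive.

(* Multiplied by h^2, <x, Ã x> is a sum over j of local energies z_j (h^2 Ã z)_j
   of five-point stencils. Adding telescoping fluxes (a discrete integration by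
   parts) turns each of them into a_j (z_j - z_{j-1})^2, plus a_j times a squared
   second difference, plus cross terms z_i (z_k - z_{k-1}) whose coefficients
   are O(h): differences of neighbouring values of a (Lipschitz) and h b_j.
   Young's inequality bounds each cross term by a small multiple of squared
   differences plus O(h^2) times squared values. Summing over j, shifting
   indices (x is padded by zeros) and dividing by h^2 gives the estimate with
   eta2 = eta0 / 2. *)

Section StencilAlgebra.
Variable R : realType.
Implicit Types (e c p u v : R).

Lemma young_cross_ge e c p u v : 0 < e -> `|p| <= c ->
  - (e * v ^+ 2) - c ^+ 2 / (4 * e) * u ^+ 2 <= p * u * v.
Proof.
move=> e_gt0 hp.
have lower : - (c * `|u| * `|v|) <= p * u * v.
  have : `|p * u * v| <= c * `|u| * `|v|.
    by rewrite !normrM; do 2 apply: ler_wpM2r => //.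
  by rewrite ler_norml => /andP[].
suff : c * `|u| * `|v| <= e * v ^+ 2 + c ^+ 2 / (4 * e) * u ^+ 2 by lra.
rewrite -[v ^+ 2](real_normK (num_real v)) -[u ^+ 2](real_normK (num_real u)).
rewrite -subr_ge0.
have -> : e * `|v| ^+ 2 + c ^+ 2 / (4 * e) * `|u| ^+ 2 - c * `|u| * `|v|
        = (2 * e * `|v| - c * `|u|) ^+ 2 / (4 * e).
  by field; rewrite gt_eqF.
by rewrite divr_ge0 ?sqr_ge0 // mulr_ge0 // ltW.
Qed.

(* [h^2 z2 (Ã z)_j] for the stencil [z0, ..., z4] = [z_(j-2), ..., z_(j+2)]
   with coefficients [a = a_j], [b = b_j], [c = r_j]. *)
Definition stencil_energy (z0 z1 z2 z3 z4 a b c h : R) : R :=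
  z2 * (a * ((- z1 + 2 * z2 - z3) + (z0 - 4 * z1 + 6 * z2 - 4 * z3 + z4) / 12)
        + h * b * ((z3 - z1) / 2 + (z0 - 2 * z1 + 2 * z3 - z4) / 12)
        + h ^+ 2 * c * z2).

(* Boundary term of the discrete integration by parts: its differences
   telescope when summed over the stencils. *)
Definition flux (z0 z1 z2 z3 a1 a2 : R) : R :=
  a1 * z1 * (z2 - z1) + a1 * z1 * ((2 * z2 - z1 - z3) - (2 * z1 - z0 - z2)) / 12
  - a2 * (2 * z1 - z0 - z2) * (z2 - z1) / 12.

Lemma flux_eq0 (z0 z1 z2 z3 a1 a2 : R) : z0 = 0 -> z1 = 0 -> z2 = 0 ->
  flux z0 z1 z2 z3 a1 a2 = 0.
Proof. by move=> -> -> ->; rewrite /flux; ring. Qed.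

(* [al], [be], [ga] stand for [a_j - a_(j-1)], [a_(j+1) - a_j] and [h b_j]. *)
Definition cross_terms (z0 z1 z2 z3 z4 al be ga : R) : R :=
  7 / 6 * al * z1 * (z2 - z1) + 1 / 12 * al * z1 * (z0 - z1)
  + 1 / 12 * al * z1 * (z2 - z3)
  + 1 / 12 * be * z3 * (z1 - z2) + 1 / 12 * be * z2 * (z2 - z1)
  + 1 / 12 * be * z3 * (z3 - z2) + 1 / 12 * be * z2 * (z2 - z3)
  + 1 / 12 * ga * z2 * (z0 - z1) + 7 / 12 * ga * z2 * (z2 - z1)
  + 7 / 12 * ga * z2 * (z3 - z2) + 1 / 12 * ga * z2 * (z3 - z4).

Lemma stencil_energy_decomp (z0 z1 z2 z3 z4 a1 a2 a3 b c h : R) :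
  stencil_energy z0 z1 z2 z3 z4 a2 b c h
    + (flux z1 z2 z3 z4 a2 a3 - flux z0 z1 z2 z3 a1 a2)
  = a2 * (z2 - z1) ^+ 2 + a2 * (z3 - 2 * z2 + z1) ^+ 2 / 12 + h ^+ 2 * c * z2 ^+ 2
    + cross_terms z0 z1 z2 z3 z4 (a2 - a1) (a3 - a2) (h * b).
Proof. by rewrite /stencil_energy /flux /cross_terms; field. Qed.

Lemma cross_terms_ge (z0 z1 z2 z3 z4 al be ga e l m : R) : 0 < e ->
  `|al| <= l -> `|be| <= l -> `|ga| <= m ->
  - (11 * e) * ((z1 - z0) ^+ 2 + (z2 - z1) ^+ 2 + (z3 - z2) ^+ 2 + (z4 - z3) ^+ 2)
  - 11 * ((2 * l + m) ^+ 2 / (4 * e)) * (z1 ^+ 2 + z2 ^+ 2 + z3 ^+ 2)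
  <= cross_terms z0 z1 z2 z3 z4 al be ga.
Proof.
move=> e_gt0 hal hbe hga.
set K := 2 * l + m; set w := K ^+ 2 / (4 * e).
have l_ge0 : 0 <= l := le_trans (normr_ge0 al) hal.
have m_ge0 : 0 <= m := le_trans (normr_ge0 ga) hga.
have scale k p c : 0 <= k -> `|p| <= c -> k * c <= K -> `|k * p| <= K.
  move=> k_ge0 hp hc; rewrite normrM ger0_norm //.
  by apply: le_trans hc; apply: ler_wpM2l.
have Y p u v : `|p| <= K -> - (e * v ^+ 2) - w * u ^+ 2 <= p * u * v.
  by move=> hp; apply: young_cross_ge.
have al1 : `|7 / 6 * al| <= K by apply: scale hal _; rewrite /K; lra.
have al2 : `|1 / 12 * al| <= K by apply: scale hal _; rewrite /K; lra.
have be1 : `|1 / 12 * be| <= K by apply: scale hbe _; rewrite /K; lra.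
have ga1 : `|1 / 12 * ga| <= K by apply: scale hga _; rewrite /K; lra.
have ga2 : `|7 / 12 * ga| <= K by apply: scale hga _; rewrite /K; lra.
have := Y _ z1 (z2 - z1) al1; have := Y _ z1 (z0 - z1) al2; have := Y _ z1 (z2 - z3) al2.
have := Y _ z3 (z1 - z2) be1; have := Y _ z2 (z2 - z1) be1.
have := Y _ z3 (z3 - z2) be1; have := Y _ z2 (z2 - z3) be1.
have := Y _ z2 (z0 - z1) ga1; have := Y _ z2 (z2 - z1) ga2.
have := Y _ z2 (z3 - z2) ga2; have := Y _ z2 (z3 - z4) ga1.
have sq_e v : 0 <= e * v ^+ 2 by rewrite mulr_ge0 ?sqr_ge0 ?ltW.
have sq_w u : 0 <= w * u ^+ 2 by rewrite mulr_ge0 ?sqr_ge0 ?divr_ge0 ?sqr_ge0 ?mulr_ge0 ?ltW.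
move: (sq_e (z1 - z0)) (sq_e (z2 - z1)) (sq_e (z3 - z2)) (sq_e (z4 - z3)).
move: (sq_w z1) (sq_w z2) (sq_w z3).
rewrite /cross_terms; lra.
Qed.

Lemma stencil_energy_ge (eta0 L Mb Mr e h z0 z1 z2 z3 z4 a1 a2 a3 b c : R) :
  0 <= h -> 0 < e -> 0 <= eta0 -> eta0 <= a2 ->
  `|a2 - a1| <= L * h -> `|a3 - a2| <= L * h -> `|b| <= Mb -> `|c| <= Mr ->
  eta0 * (z2 - z1) ^+ 2
  - 11 * e * ((z1 - z0) ^+ 2 + (z2 - z1) ^+ 2 + (z3 - z2) ^+ 2 + (z4 - z3) ^+ 2)
  - (11 * ((2 * L + Mb) ^+ 2 / (4 * e)) + Mr) * h ^+ 2 * (z1 ^+ 2 + z2 ^+ 2 + z3 ^+ 2)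
  <= stencil_energy z0 z1 z2 z3 z4 a2 b c h
     + (flux z1 z2 z3 z4 a2 a3 - flux z0 z1 z2 z3 a1 a2).
Proof.
move=> h_ge0 e_gt0 eta0_ge0 ha2 ha1 ha3 hb hc.
rewrite stencil_energy_decomp.
have hhb : `|h * b| <= Mb * h by rewrite normrM ger0_norm // mulrC ler_wpM2r.
have := cross_terms_ge z0 z1 z2 z3 z4 e_gt0 ha1 ha3 hhb.
have Mr_ge0 : 0 <= Mr := le_trans (normr_ge0 c) hc.
have leading : eta0 * (z2 - z1) ^+ 2 <= a2 * (z2 - z1) ^+ 2 by rewrite ler_wpM2r ?sqr_ge0.
have a2_ge0 : 0 <= a2 := le_trans eta0_ge0 ha2.
have := divr_ge0 (mulr_ge0 a2_ge0 (sqr_ge0 (z3 - 2 * z2 + z1))) (ler0n R 12).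
have : - Mr * (h ^+ 2 * z2 ^+ 2) <= c * (h ^+ 2 * z2 ^+ 2).
  rewrite ler_wpM2r ?(mulr_ge0 (sqr_ge0 h) (sqr_ge0 z2)) //.
  by move: hc; rewrite ler_norml => /andP[].
have := mulr_ge0 Mr_ge0 (mulr_ge0 (sqr_ge0 h) (addr_ge0 (sqr_ge0 z1) (sqr_ge0 z3))).
lra.
Qed.

End StencilAlgebra.

Section ShiftedSums.
Variable R : realType.
Implicit Types (F G : nat -> R).

Lemma sum_nat_succ F M :
  \sum_(0 <= k < M) F k.+1 = \sum_(0 <= k < M) F k + F M - F 0%N.
Proof.
have := @big_nat_recl R 0 +%R M 0 F (leq0n M); rewrite big_nat_recr //= => ->.
by rewrite addrC addKr.
Qed.

Lemma sum_nat_shift_le F M i : (forall k, 0 <= F k) ->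
  (forall k, (M <= k)%N -> F k = 0) ->
  \sum_(0 <= k < M) F (i + k)%N <= \sum_(0 <= k < M) F k.
Proof.
move=> F_ge0 F_out; elim: i => [|i IH] //.
apply: le_trans IH; under eq_bigr do rewrite addSnnS.
rewrite (sum_nat_succ (fun k => F (i + k)%N)) F_out ?leq_addl //.
by rewrite addr0 gerDl oppr_le0.
Qed.

Lemma sum_ord_shift G s J M : (J + s <= M)%N ->
  (forall k, (k < s)%N -> G k = 0) -> (forall k, (J + s <= k)%N -> G k = 0) ->
  \sum_(i < J) G (s + i)%N = \sum_(0 <= k < M) G k.
Proof.
move=> hM G_lo G_hi.
have s_le_M : (s <= M)%N := leq_trans (leq_addl J s) hM.
have lo : \sum_(0 <= k < s) G k = 0.
  by rewrite big_nat big1 // => k /andP[_]; exact: G_lo.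
have hi : \sum_(J + s <= k < M) G k = 0.
  by rewrite big_nat big1 // => k /andP[+ _]; exact: G_hi.
rewrite [RHS](big_cat_nat (n := s)) // (big_cat_nat (m := s) (n := J + s)) ?leq_addl //=.
rewrite lo hi add0r addr0 -{2}[s]add0n big_addn addnK big_mkord.
by apply: eq_bigr => i _; rewrite addnC.
Qed.

Lemma sum_shifted_bounds_ge F G M (eta e C : R) : 0 <= e -> 0 <= C ->
  (forall k, 0 <= F k) -> (forall k, 0 <= G k) -> F 0%N = 0 ->
  (forall k, (M <= k)%N -> F k = 0) -> (forall k, (M <= k)%N -> G k = 0) ->
  (eta - 4 * e) * \sum_(0 <= k < M) F k - 3 * C * \sum_(0 <= k < M) G k
  <= \sum_(0 <= k < M) (eta * F k.+1 - e * (F k + F k.+1 + F k.+2 + F k.+3)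
                        - C * (G k.+1 + G k.+2 + G k.+3)).
Proof.
move=> e_ge0 C_ge0 F_ge0 G_ge0 F0 F_out G_out.
rewrite !sumrB -!mulr_sumr !big_split /=.
have F1 : \sum_(0 <= k < M) F k.+1 = \sum_(0 <= k < M) F k.
  by rewrite sum_nat_succ F_out // F0 subr0 addr0.
have F2 : \sum_(0 <= k < M) F k.+2 <= \sum_(0 <= k < M) F k
  := sum_nat_shift_le 2 F_ge0 F_out.
have F3 : \sum_(0 <= k < M) F k.+3 <= \sum_(0 <= k < M) F k
  := sum_nat_shift_le 3 F_ge0 F_out.
have G1 : \sum_(0 <= k < M) G k.+1 <= \sum_(0 <= k < M) G k
  := sum_nat_shift_le 1 G_ge0 G_out.
have G2 : \sum_(0 <= k < M) G k.+2 <= \sum_(0 <= k < M) G k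
  := sum_nat_shift_le 2 G_ge0 G_out.
have G3 : \sum_(0 <= k < M) G k.+3 <= \sum_(0 <= k < M) G k
  := sum_nat_shift_le 3 G_ge0 G_out.
have := ler_wpM2l e_ge0 F2; have := ler_wpM2l e_ge0 F3.
have := ler_wpM2l C_ge0 G1; have := ler_wpM2l C_ge0 G2; have := ler_wpM2l C_ge0 G3.
rewrite F1; lra.
Qed.

End ShiftedSums.

Section StencilSum.
Variable R : realType.
Variables (z a b c : nat -> R) (M : nat) (h eta0 L Mb Mr e : R).
Hypotheses (h_ge0 : 0 <= h) (e_gt0 : 0 < e) (eta0_ge0 : 0 <= eta0).
Hypothesis a_ge : forall k, eta0 <= a k.
Hypothesis a_lip : forall k, `|a k.+1 - a k| <= L * h.
Hypothesis b_bound : forall k, `|b k| <= Mb.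
Hypothesis c_bound : forall k, `|c k| <= Mr.
Hypothesis z_lo : forall k, (k < 3)%N -> z k = 0.
Hypothesis z_hi : forall k, (M <= k)%N -> z k = 0.

Lemma stencil_sum_ge :
  (eta0 - 44 * e) * \sum_(0 <= k < M) (z k.+1 - z k) ^+ 2
  - 3 * (11 * ((2 * L + Mb) ^+ 2 / (4 * e)) + Mr) * h ^+ 2 * \sum_(0 <= k < M) z k ^+ 2
  <= \sum_(0 <= k < M) stencil_energy (z k) (z k.+1) (z k.+2) (z k.+3) (z k.+4)
                                      (a k.+2) (b k.+2) (c k.+2) h.
Proof.
pose F k := (z k.+1 - z k) ^+ 2.
pose G k := z k ^+ 2.
pose T k := flux (z k) (z k.+1) (z k.+2) (z k.+3) (a k.+1) (a k.+2).
set C := 11 * _ + Mr.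
rewrite -[X in X <= _]/((eta0 - 44 * e) * \sum_(0 <= k < M) F k
                         - 3 * C * h ^+ 2 * \sum_(0 <= k < M) G k).
have F_ge0 k : 0 <= F k := sqr_ge0 _.
have G_ge0 k : 0 <= G k := sqr_ge0 _.
have F_out k : (M <= k)%N -> F k = 0.
  by move=> hk; rewrite /F !z_hi ?subrr ?expr0n // leqW.
have G_out k : (M <= k)%N -> G k = 0 by move=> hk; rewrite /G z_hi ?expr0n.
have F0 : F 0%N = 0 by rewrite /F !z_lo // subrr expr0n.
have Mr_ge0 : 0 <= Mr := le_trans (normr_ge0 _) (c_bound 0).
have C_ge0 : 0 <= C by rewrite addr_ge0 // mulr_ge0 // divr_ge0 ?sqr_ge0 // mulr_ge0 // ltW.
have C_h_ge0 : 0 <= C * h ^+ 2 := mulr_ge0 C_ge0 (sqr_ge0 h).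
have e11_ge0 : 0 <= 11 * e := mulr_ge0 (ler0n R 11) (ltW e_gt0).
have telescoped : \sum_(0 <= k < M) (T k.+1 - T k) = 0.
  by rewrite telescope_sumr // /T !flux_eq0 ?subrr //;
    first [exact: z_lo | apply: z_hi; lia].
have local k : eta0 * F k.+1 - 11 * e * (F k + F k.+1 + F k.+2 + F k.+3)
    - C * h ^+ 2 * (G k.+1 + G k.+2 + G k.+3)
  <= stencil_energy (z k) (z k.+1) (z k.+2) (z k.+3) (z k.+4) (a k.+2) (b k.+2) (c k.+2) h
     + (T k.+1 - T k).
  exact: (stencil_energy_ge (z k) (z k.+1) (z k.+2) (z k.+3) (z k.+4) h_ge0 e_gt0
            eta0_ge0 (a_ge _) (a_lip _) (a_lip _) (b_bound _) (c_bound _)).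
rewrite -[X in _ <= X]addr0 -[X in _ <= _ + X]telescoped -big_split /=.
apply: le_trans (ler_sum _ (fun k _ => local k)).
apply: (le_trans _ (sum_shifted_bounds_ge _ e11_ge0 C_h_ge0 F_ge0 G_ge0 F0 F_out G_out)).
lra.
Qed.

End StencilSum.

Section Padding.
Variables (R : realType) (J : nat) (x : 'cV[R]_J).

Lemma ext_ord (i : 'I_J) : ext x (Posz i.+1) = x i ord0.
Proof.
rewrite /ext (bigD1 i) //= eqxx big1 ?addr0 // => j ji.
case: eqP => // [[]] ji'; case/eqP: ji; apply: val_inj => /=; lia.
Qed.

Lemma ext_eq0 (j : int) : (forall i : 'I_J, Posz i.+1 != j) -> ext x j = 0.
Proof. by move=> j_out; rewrite /ext big1 // => i _; rewrite (negbTE (j_out i)). Qed.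

Lemma extZ (c : R) (j : int) : ext (c *: x) j = c * ext x j.
Proof.
rewrite /ext mulr_sumr; apply: eq_bigr => i _; rewrite mxE.
by case: ifP => _; rewrite ?mulr0.
Qed.

(* [padded k = x_(k-2)], zero outside [1..J]: the shift makes every index of a
   stencil centred at an unknown a natural number. *)
Definition padded (k : nat) : R := ext x (Posz k - 2).

Lemma padded_ext (k : nat) : padded k.+2 = ext x (Posz k).
Proof. by rewrite /padded; congr ext; lia. Qed.

Lemma padded_ord (i : 'I_J) : padded i.+3 = x i ord0.
Proof. by rewrite padded_ext ext_ord. Qed.

Lemma padded_lo k : (k < 3)%N -> padded k = 0.
Proof. by move=> k_lt3; apply: ext_eq0 => i; apply/eqP; lia. Qed.

Lemma padded_hi k : (J.+3 <= k)%N -> padded k = 0.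
Proof. by move=> k_ge; apply: ext_eq0 => i; apply/eqP; have := ltn_ord i; lia. Qed.

Lemma norm2sq_padded : norm2sq x = \sum_(0 <= k < J.+3) padded k ^+ 2.
Proof.
rewrite /norm2sq; under eq_bigr do rewrite -padded_ord.
apply: (sum_ord_shift (s := 3) (G := fun k => padded k ^+ 2)) => [|k k_lt|k k_ge].
- by rewrite addn3.
- by rewrite padded_lo ?expr0n.
- by rewrite padded_hi ?expr0n // -addn3.
Qed.

Lemma Nnorm_padded (c : R) :
  Nnorm (c *: x) ^+ 2 = c ^+ 2 * \sum_(0 <= k < J.+3) (padded k.+1 - padded k) ^+ 2.
Proof.
rewrite /Nnorm sqr_sqrtr ?sumr_ge0 // => [|k _]; last exact: sqr_ge0.
under eq_bigr do rewrite real_normK ?num_real // !extZ -mulrBr exprMn -!padded_ext.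
rewrite -mulr_sumr; congr (_ * _).
apply: (sum_ord_shift (s := 2) (G := fun k => (padded k.+1 - padded k) ^+ 2))
  => [|k k_lt|k k_ge].
- by rewrite addn2.
- by rewrite !padded_lo ?subrr ?expr0n // ltnW.
- by rewrite !padded_hi ?subrr ?expr0n //; lia.
Qed.

End Padding.

Section Grid.
Variables (R : realType) (Xmin Xmax : R) (J : nat).
Hypothesis Xmin_lt_Xmax : Xmin < Xmax.

Local Notation h := (mesh Xmin Xmax J).

Lemma mesh_gt0 : 0 < h.
Proof. by rewrite divr_gt0 ?subr_gt0 ?ltr0n. Qed.

Lemma grid_succ m : grid Xmin Xmax J m.+1 - grid Xmin Xmax J m = h.
Proof. by rewrite /grid -addn1 natrD; ring. Qed.

Lemma grid_in_domain m : (0 < m <= J)%N -> Xmin < grid Xmin Xmax J m < Xmax.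
Proof.
case/andP=> m_gt0 m_le_J.
set q : R := m%:R / J.+1%:R.
have q_gt0 : 0 < q by rewrite divr_gt0 ?ltr0n.
have q_lt1 : q < 1 by rewrite ltr_pdivrMr ?ltr0n // mul1r ltr_nat ltnS.
have -> : grid Xmin Xmax J m = Xmin + q * (Xmax - Xmin) by rewrite /grid /mesh /q mulrA mulrAC.
have d_gt0 : 0 < Xmax - Xmin by rewrite subr_gt0.
have := mulr_gt0 q_gt0 d_gt0.
have : q * (Xmax - Xmin) < 1 * (Xmax - Xmin) by rewrite ltr_pM2r.
by move=> *; apply/andP; split; lra.
Qed.

(* Grid point of padded index [k], clamped to [1..J]: every sample lies in the
   domain and consecutive samples are at most one mesh step apart. *)
Definition node (k : nat) : R := grid Xmin Xmax J (maxn 1 (minn (k - 2) J)).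

Lemma node_in_domain k : (0 < J)%N -> Xmin < node k < Xmax.
Proof. by move=> J_gt0; apply: grid_in_domain; lia. Qed.

Lemma node_succ k : `|node k.+1 - node k| <= h.
Proof.
rewrite /node; have [->|->] : maxn 1 (minn (k.+1 - 2) J) = maxn 1 (minn (k - 2) J)
    \/ maxn 1 (minn (k.+1 - 2) J) = (maxn 1 (minn (k - 2) J)).+1 by lia.
- by rewrite subrr normr0 ltW ?mesh_gt0.
- by rewrite grid_succ gtr0_norm ?mesh_gt0.
Qed.

Lemma node_interior i : (i < J)%N -> node i.+3 = grid Xmin Xmax J i.+1.
Proof. by move=> i_lt_J; rewrite /node; congr grid; lia. Qed.

Lemma node_lipschitz (f : R -> R) (L : R) :
    (forall y1 y2, Xmin < y1 < Xmax -> Xmin < y2 < Xmax ->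
       `|f y1 - f y2| <= L * `|y1 - y2|) ->
  (0 < J)%N -> forall k, `|f (node k.+1) - f (node k)| <= `|L| * h.
Proof.
move=> f_lip J_gt0 k.
apply: le_trans (f_lip _ _ (node_in_domain _ J_gt0) (node_in_domain _ J_gt0)) _.
apply: le_trans (ler_wpM2r (normr_ge0 _) (ler_norm L)) _.
by rewrite ler_wpM2l ?node_succ.
Qed.

Lemma dotv_Atilde_padded (a b r : R -> R -> R) (t : R) (x : 'cV[R]_J) :
  h ^+ 2 * dotv x (Atilde_app a b r Xmin Xmax t x)
  = \sum_(0 <= k < J.+3) stencil_energy (padded x k) (padded x k.+1) (padded x k.+2)
      (padded x k.+3) (padded x k.+4) (a t (node k.+2)) (b t (node k.+2)) (r t (node k.+2)) h.
Proof.
rewrite /dotv mulr_sumr -[RHS](sum_ord_shift (s := 1) (J := J)) => [|||k k_ge]; last 3 first.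
- by rewrite addn1 ltnW.
- by case=> // _; rewrite /stencil_energy padded_lo ?mul0r.
- by rewrite /stencil_energy padded_hi ?mul0r //; lia.
apply: eq_bigr => i _; rewrite mxE /= add1n node_interior //.
have -> : Posz i.+1 - 1 = Posz i by lia.
have -> : Posz i.+1 + 1 = Posz i.+2 by lia.
have -> : Posz i.+1 + 2 = Posz i.+3 by lia.
rewrite -/(padded x i.+1) -!padded_ext -padded_ord /stencil_energy.
by field; rewrite gt_eqF ?mesh_gt0.
Qed.

End Grid.

Theorem lemma5p3 (R : realType) (Xmin Xmax T : R) (a b r : R -> R -> R)
  (eta0 L : R) :
  Xmin < Xmax -> 0 < T ->
  (exists M : R, forall t x, 0 < t < T -> Xmin < x < Xmax -> `|a t x| <= M) ->
  (exists M : R, forall t x, 0 < t < T -> Xmin < x < Xmax -> `|b t x| <= M) ->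
  (exists M : R, forall t x, 0 < t < T -> Xmin < x < Xmax -> `|r t x| <= M) ->
  0 < eta0 ->
  (forall t x, 0 < t < T -> Xmin < x < Xmax -> eta0 <= a t x) ->
  (forall t x y, 0 < t < T -> Xmin < x < Xmax -> Xmin < y < Xmax ->
     `|a t x - a t y| <= L * `|x - y|) ->
  exists eta2 gamma2 : R, 0 < eta2 /\ 0 <= gamma2 /\
    forall (J : nat) (t : R) (x : 'cV[R]_J), (1 <= J)%N -> 0 < t < T ->
      dotv x (Atilde_app a b r Xmin Xmax t x) >=
        eta2 * Nnorm ((mesh Xmin Xmax J)^-1 *: x) ^+ 2 - gamma2 * norm2sq x.
Proof.
move=> hX _ _ [Mb hb] [Mr hr] eta0_gt0 ha a_lip.
(* With this Young parameter the loss [44 e] of [stencil_sum_ge] is eta0 / 2. *)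
set e := eta0 / 88.
have e_gt0 : 0 < e by rewrite divr_gt0.
exists (eta0 / 2), (3 * (11 * ((2 * `|L| + `|Mb|) ^+ 2 / (4 * e)) + `|Mr|)).
split; first by rewrite divr_gt0.
split.
  by rewrite mulr_ge0 // addr_ge0 // mulr_ge0 // divr_ge0 ?sqr_ge0 // mulr_ge0 // ltW.
move=> J t x J_gt0 t_in; set h := mesh Xmin Xmax J.
have h_gt0 : 0 < h := mesh_gt0 J hX.
have in_dom k : Xmin < node Xmin Xmax J k < Xmax := node_in_domain hX k J_gt0.
have := stencil_sum_ge (z := padded x) (M := J.+3) (ltW h_gt0) e_gt0 (ltW eta0_gt0)
  (fun k => ha _ _ t_in (in_dom k)) (node_lipschitz hX (fun y1 y2 => a_lip t y1 y2 t_in) J_gt0)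
  (fun k => le_trans (hb _ _ t_in (in_dom k)) (ler_norm Mb))
  (fun k => le_trans (hr _ _ t_in (in_dom k)) (ler_norm Mr)) (padded_lo x) (padded_hi x).
rewrite -dotv_Atilde_padded // -norm2sq_padded Nnorm_padded => key.
rewrite -(ler_pM2l (exprn_gt0 2 h_gt0)); apply: le_trans key.
rewrite le_eqVlt; apply/predU1P; left.
by rewrite /e; field; rewrite !gt_eqF.
Qed.
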